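(* Assume $E\in\mathbb{S}^n_{++}$, $0<\alpha<1$ and $0\ne X\in\partial K_E(\alpha)$. Let $S:=\frac{1}{n-\alpha^2}\big(E^{-1}-\frac{\alpha^2}{\mathrm{tr}(E^{-1}X)}E^{-1}XE^{-1}\big)$ and $q(t):=\mathrm{tr}\big(((E+tX)S)^2\big)$. Then \[ 0<t\le\alpha/\|X\|_E\ \Rightarrow\ q(t)<\frac{1}{n-\alpha^2}\Big(1-2t\,\frac{1-\alpha}{n-\alpha^2}\,\|X\|_E\,\big(\alpha-t\|X\|_E\big)\Big). \]
   Context: $\mathbb{S}^n$ is the space of real symmetric $n\times n$ matrices, $\mathbb{S}^n_{++}$ the positive definite matrices. For $E\in\mathbb{S}^n_{++}$: $\|X\|_E=\mathrm{tr}((E^{-1}X)^2)^{1/2}$, and for $\gamma>0$, $K_E(\gamma)=\{X\in\mathbb{S}^n:\mathrm{tr}(E^{-1}X)\ge\gamma\|X\|_E\}$; $\partial$ denotes boundary. *)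

From mathcomp Require Import all_boot all_order all_algebra.
Set Implicit Arguments. Unset Strict Implicit. Unset Printing Implicit Defensive.
Import Order.TTheory GRing.Theory Num.Theory.
Local Open Scope ring_scope.

Definition symmetric_mx (R : rcfType) (n : nat) (X : 'M[R]_n) : Prop := X^T = X.

Definition posdef (R : rcfType) (n : nat) (E : 'M[R]_n) : Prop :=
  symmetric_mx E /\
  forall v : 'cV[R]_n, v != 0 -> 0 < (v^T *m E *m v) 0 0.

Definition normE (R : rcfType) (n : nat) (E X : 'M[R]_n) : R :=
  Num.sqrt (\tr ((invmx E *m X) *m (invmx E *m X))).

Definition K_E (R : rcfType) (n : nat) (E : 'M[R]_n) (gamma : R) (X : 'M[R]_n) : Prop :=
  symmetric_mx X /\ gamma * normE E X <= \tr (invmx E *m X).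

(* Topological boundary of a subset K of S^n (relative to S^n), X in closure(K)
   and in closure(S^n \ K); the topology on S^n is that of the norm ||.||_E
   (all norms on the finite-dimensional space S^n are equivalent). *)
Definition sym_boundary (R : rcfType) (n : nat) (E : 'M[R]_n)
    (K : 'M[R]_n -> Prop) (X : 'M[R]_n) : Prop :=
  symmetric_mx X /\
  (forall eps : R, 0 < eps ->
     exists Y, [/\ symmetric_mx Y, normE E (Y - X) < eps & K Y]) /\
  (forall eps : R, 0 < eps ->
     exists Y, [/\ symmetric_mx Y, normE E (Y - X) < eps & ~ K Y]).

From mathcomp Require Import all_boot all_order all_algebra.
From mathcomp Require Import ring lra.
Import Order.TTheory GRing.Theory Num.Theory.
Local Open Scope ring_scope.
Set Implicit Arguments. Unset Strict Implicit.

(* A congruence W with W^T E W = 1 (built by induction on Schur complements)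
   reduces everything to E = 1: A := W^T X W is symmetric, ||X||_E is its
   Frobenius norm nu and tr(E^-1 X) is tr A.  The function
   tr(E^-1 Y) - alpha ||Y||_E is Lipschitz, hence vanishes on the boundary of
   K_E(alpha), so tr A = alpha nu.  Then q(t) is a polynomial whose
   coefficients involve tr A, tr A^2 = nu^2, tr A^3 <= nu^3 and tr A^4 <= nu^4
   (Cauchy-Schwarz), and the bound becomes an elementary inequality in t nu. *)

Lemma sum_mul_sqr_le (R : realFieldType) (I : finType) (u v : I -> R) :
  (\sum_i u i * v i) ^+ 2 <= (\sum_i u i ^+ 2) * (\sum_i v i ^+ 2).
Proof.
have lagrange : \sum_i \sum_j (u i * v j - u j * v i) ^+ 2 =
   2 * ((\sum_i u i ^+ 2) * (\sum_i v i ^+ 2) - (\sum_i u i * v i) ^+ 2).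
  have uv : \sum_i \sum_j u i ^+ 2 * v j ^+ 2 = (\sum_i u i ^+ 2) * (\sum_i v i ^+ 2).
    by rewrite mulr_suml; apply: eq_bigr => i _; rewrite mulr_sumr.
  have cross : \sum_i \sum_j 2 * ((u i * v i) * (u j * v j)) =
               2 * (\sum_i u i * v i) ^+ 2.
    rewrite expr2 mulr_suml mulr_sumr; apply: eq_bigr => i _.
    by rewrite !mulr_sumr; apply: eq_bigr => j _; rewrite mulrA.
  transitivity (\sum_i \sum_j (u i ^+ 2 * v j ^+ 2 + u j ^+ 2 * v i ^+ 2
                     - 2 * ((u i * v i) * (u j * v j)))).
    by apply: eq_bigr => i _; apply: eq_bigr => j _; ring.
  under eq_bigr => i _ do rewrite sumrB big_split /=.
  by rewrite sumrB big_split /= uv exchange_big /= uv cross; ring.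
have : 0 <= \sum_i \sum_j (u i * v j - u j * v i) ^+ 2.
  by apply: sumr_ge0 => i _; apply: sumr_ge0 => j _; apply: sqr_ge0.
by rewrite lagrange pmulr_rge0 // subr_ge0.
Qed.

Section Frobenius.

Variable R : realFieldType.

Definition frob2 m n (A : 'M[R]_(m, n)) := \sum_i \sum_j A i j ^+ 2.

Lemma frob2_ge0 m n (A : 'M[R]_(m, n)) : 0 <= frob2 A.
Proof. by apply: sumr_ge0 => i _; apply: sumr_ge0 => j _; apply: sqr_ge0. Qed.

Lemma mxtrace_mul_trmx m n (A B : 'M[R]_(m, n)) :
  \tr (A *m B^T) = \sum_i \sum_j A i j * B i j.
Proof.
by apply: eq_bigr => i _; rewrite mxE; apply: eq_bigr => j _; rewrite mxE.
Qed.

Lemma frob2E m n (A : 'M[R]_(m, n)) : frob2 A = \tr (A *m A^T).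
Proof.
by rewrite mxtrace_mul_trmx; apply: eq_bigr => i _; apply: eq_bigr => j _; rewrite expr2.
Qed.

Lemma mxtrace_mul_trmx_sqr_le m n (A B : 'M[R]_(m, n)) :
  \tr (A *m B^T) ^+ 2 <= frob2 A * frob2 B.
Proof.
rewrite mxtrace_mul_trmx /frob2 !pair_bigA /=.
exact: (sum_mul_sqr_le (fun p : 'I_m * 'I_n => A p.1 p.2) (fun p => B p.1 p.2)).
Qed.

Lemma frob2_mul_le m n p (A : 'M[R]_(m, n)) (B : 'M[R]_(n, p)) :
  frob2 (A *m B) <= frob2 A * frob2 B.
Proof.
rewrite /frob2 [X in _ <= _ * X]exchange_big /= mulr_suml; apply: ler_sum => i _.
rewrite mulr_sumr; apply: ler_sum => j _; rewrite mxE.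
exact: (sum_mul_sqr_le (fun k => A i k) (fun k => B k j)).
Qed.

Lemma frob2D m n (A B : 'M[R]_(m, n)) :
  frob2 (A + B) = frob2 A + 2 * \tr (A *m B^T) + frob2 B.
Proof.
rewrite mxtrace_mul_trmx /frob2 mulr_sumr -!big_split; apply: eq_bigr => i _.
by rewrite mulr_sumr -!big_split; apply: eq_bigr => j _; rewrite mxE /=; ring.
Qed.

Lemma frob2N m n (A : 'M[R]_(m, n)) : frob2 (- A) = frob2 A.
Proof.
by apply: eq_bigr => i _; apply: eq_bigr => j _; rewrite mxE sqrrN.
Qed.

Lemma mxtrace_sqr_le n (A : 'M[R]_n) : \tr A ^+ 2 <= n%:R * frob2 A.
Proof.
have := mxtrace_mul_trmx_sqr_le A 1%:M.
by rewrite trmx1 mulmx1 [frob2 1%:M]frob2E trmx1 mulmx1 mxtrace1 mulrC.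
Qed.

End Frobenius.

Lemma le_sqr_ge0 (R : realDomainType) (x y : R) : 0 <= y -> x ^+ 2 <= y ^+ 2 -> x <= y.
Proof.
move=> y_ge0 le_xy; apply: le_trans (ler_norm x) _.
by rewrite -ler_sqr ?nnegrE // real_normK ?num_real.
Qed.

Section FrobeniusNorm.

Variable R : rcfType.

Definition frob m n (A : 'M[R]_(m, n)) := Num.sqrt (frob2 A).

Lemma frob_ge0 m n (A : 'M[R]_(m, n)) : 0 <= frob A.
Proof. exact: sqrtr_ge0. Qed.

Lemma sqr_frob m n (A : 'M[R]_(m, n)) : frob A ^+ 2 = frob2 A.
Proof. by rewrite sqr_sqrtr ?frob2_ge0. Qed.

Lemma mxtrace_mul_trmx_le m n (A B : 'M[R]_(m, n)) :
  \tr (A *m B^T) <= frob A * frob B.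
Proof.
apply: le_sqr_ge0; first by rewrite mulr_ge0 ?frob_ge0.
by rewrite exprMn !sqr_frob mxtrace_mul_trmx_sqr_le.
Qed.

Lemma frobN m n (A : 'M[R]_(m, n)) : frob (- A) = frob A.
Proof. by rewrite /frob frob2N. Qed.

Lemma frobD_le m n (A B : 'M[R]_(m, n)) : frob (A + B) <= frob A + frob B.
Proof.
apply: le_sqr_ge0; first by rewrite addr_ge0 ?frob_ge0.
rewrite sqr_frob frob2D -!sqr_frob sqrrD lerD2r lerD2l mulr2n -mulr2n mulr_natl.
by rewrite ler_pMn2r // mxtrace_mul_trmx_le.
Qed.

Lemma normr_mxtrace_le n (A : 'M[R]_n) : `|\tr A| <= Num.sqrt n%:R * frob A.
Proof.
apply: le_sqr_ge0; first by rewrite mulr_ge0 ?sqrtr_ge0 ?frob_ge0.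
by rewrite real_normK ?num_real // exprMn sqr_sqrtr ?ler0n // sqr_frob mxtrace_sqr_le.
Qed.

Variable n : nat.
Variable A : 'M[R]_n.
Hypothesis symA : A^T = A.

Lemma frob2_sqr_le : frob2 (A *m A) <= frob A ^+ 4.
Proof. by rewrite (_ : 4 = 2 * 2)%N // exprM sqr_frob expr2 frob2_mul_le. Qed.

Lemma mxtrace_cube_le : \tr (A *m A *m A) <= frob A ^+ 3.
Proof.
have symAA : (A *m A)^T = A *m A by rewrite trmx_mul symA.
rewrite -mulmxA -[X in _ *m X]symAA.
apply: le_trans (mxtrace_mul_trmx_le _ _) _.
rewrite exprSr mulrC ler_wpM2r ?frob_ge0 //.
apply: le_sqr_ge0; first by rewrite exprn_ge0 ?frob_ge0.
by rewrite [frob (A *m A) ^+ 2]sqr_frob -exprM frob2_sqr_le.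
Qed.

Lemma mxtrace_pow4_le : \tr (A *m A *m A *m A) <= frob A ^+ 4.
Proof.
have symAA : (A *m A)^T = A *m A by rewrite trmx_mul symA.
by rewrite -mulmxA -[X in _ *m X]symAA -frob2E frob2_sqr_le.
Qed.

End FrobeniusNorm.

Lemma mxtrace_expand_sqr (R : comNzRingType) n (A : 'M[R]_n) (t b : R) :
  \tr ((1%:M + t *: A) *m (1%:M - b *: A) *m ((1%:M + t *: A) *m (1%:M - b *: A))) =
  n%:R + 2 * (t - b) * \tr A + ((t - b) ^+ 2 - 2 * t * b) * \tr (A *m A)
  - 2 * t * b * (t - b) * \tr (A *m A *m A) + t ^+ 2 * b ^+ 2 * \tr (A *m A *m A *m A).
Proof.
have -> : (1%:M + t *: A) *m (1%:M - b *: A) = 1%:M + (t - b) *: A - (t * b) *: (A *m A).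
  rewrite mulmxDl mulmxBr mulmxBr !mul1mx mulmx1 -scalemxAl -scalemxAr scalerA scalerBl.
  by rewrite !addrA (addrAC 1%:M).
rewrite !(mulmxDl, mulmxDr, mulmxBl, mulmxBr, mul1mx, mulmx1, mulmxN, mulNmx).
rewrite -!scalemxAl -!scalemxAr !scalerA.
rewrite !(raddfD, raddfB, raddfN) /= !mxtraceZ mxtrace1 ?mulmxA.
ring.
Qed.

Lemma trace_expansion_lt (R : realFieldType) (N nu b alpha t m3 m4 : R) :
  1 <= N -> 0 < nu -> b * nu = alpha -> 0 < alpha -> alpha < 1 ->
  0 < t -> t * nu <= alpha -> m3 <= nu ^+ 3 -> m4 <= nu ^+ 4 ->
  (N - alpha ^+ 2)^-2 *
    (N + 2 * (t - b) * (alpha * nu) + ((t - b) ^+ 2 - 2 * t * b) * nu ^+ 2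
     - 2 * t * b * (t - b) * m3 + t ^+ 2 * b ^+ 2 * m4)
  < (N - alpha ^+ 2)^-1 *
    (1 - 2 * t * ((1 - alpha) / (N - alpha ^+ 2)) * nu * (alpha - t * nu)).
Proof.
move=> N_ge1 nu_gt0 bnu alpha_gt0 alpha_lt1 t_gt0 tnu m3_le m4_le.
set c := (N - alpha ^+ 2)^-1; rewrite -exprVn -/c.
have d_gt0 : 0 < N - alpha ^+ 2 by nra.
have c_gt0 : 0 < c by rewrite invr_gt0.
have cd : c * (N - alpha ^+ 2) = 1 by rewrite mulVf ?gt_eqF.
have b_gt0 : 0 < b by nra.
have tb_le0 : t - b <= 0 by rewrite -(pmulr_lle0 _ nu_gt0); nra.
have e3 : 2 * t * b * (t - b) * nu ^+ 3 <= 2 * t * b * (t - b) * m3.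
  by rewrite ler_wnM2l // -mulrA; apply: mulr_ge0_le0 => //; nra.
have e4 : t ^+ 2 * b ^+ 2 * m4 <= t ^+ 2 * b ^+ 2 * nu ^+ 4.
  by rewrite ler_wpM2l //; nra.
have -> : c * (1 - 2 * t * ((1 - alpha) / (N - alpha ^+ 2)) * nu * (alpha - t * nu)) =
   c ^+ 2 * ((N - alpha ^+ 2) - 2 * t * (1 - alpha) * nu * (alpha - t * nu)).
  rewrite -/c mulrBr mulr1 {1}(_ : c = c ^+ 2 * (N - alpha ^+ 2)).
    by ring.
  by rewrite expr2 -mulrA cd mulr1.
rewrite ltr_pM2l ?exprn_gt0 //.
set s := t * nu.
(* with [b nu = alpha] the left side only depends on [s = t nu], as a polynomial *)
have key : N + 2 * (t - b) * (alpha * nu) + ((t - b) ^+ 2 - 2 * t * b) * nu ^+ 2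
      - 2 * t * b * (t - b) * nu ^+ 3 + t ^+ 2 * b ^+ 2 * nu ^+ 4
      = N - alpha ^+ 2 + s ^+ 2 - 2 * s * alpha - 2 * s * alpha * (s - alpha)
        + s ^+ 2 * alpha ^+ 2 by rewrite /s -bnu; ring.
have s_gt0 : 0 < s by rewrite mulr_gt0.
have : 0 < s ^+ 2 * (1 - alpha ^+ 2) by rewrite mulr_gt0 ?exprn_gt0 //; nra.
have -> : 2 * t * (1 - alpha) * nu * (alpha - s) = 2 * (1 - alpha) * (s * alpha - s ^+ 2).
  by rewrite /s; ring.
lra.
Qed.

Section SchurComplement.

Variables (R : rcfType) (n : nat).
Variables (a : R) (b : 'M[R]_(1, n)) (c : 'M[R]_(n, 1)) (D : 'M[R]_n).
Hypothesis posM : posdef (block_mx a%:M b c D).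

Let symM : [/\ (a%:M : 'M_1)^T = a%:M, c^T = b, b^T = c & D^T = D].
Proof. by case: posM => /eqP; rewrite tr_block_mx => /eqP/eq_block_mx. Qed.

Lemma posdef_block_ul_gt0 : 0 < a.
Proof.
have := posM.2 (col_mx 1%:M 0); rewrite col_mx_eq0 oner_eq0 /= => /(_ isT).
rewrite tr_col_mx mul_row_block trmx1 trmx0 !mul0mx !addr0 !mul1mx.
by rewrite mul_row_col mulmx0 addr0 mulmx1 mxE.
Qed.

Let a_neq0 : a != 0. Proof. by rewrite gt_eqF ?posdef_block_ul_gt0. Qed.

Definition schur := D - a^-1 *: (c *m b).

Lemma posdef_schur : posdef schur.
Proof.
have [_ cT bT DT] := symM.
split; first by rewrite /symmetric_mx /schur linearB /= linearZ /= trmx_mul bT cT DT.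
move=> w w_neq0.
have := posM.2 (col_mx (- a^-1 *: (b *m w)) w).
rewrite col_mx_eq0 negb_and w_neq0 orbT => /(_ isT).
rewrite tr_col_mx mul_row_block mul_row_col !linearZ /= trmx_mul bT.
rewrite mul_mx_scalar scalerA (mulrN a) mulfV // scaleN1r addNr mul0mx scaler0 add0r.
rewrite /schur mulmxBr mulmxBl -scalemxAl -!scalemxAr -scalemxAl -!mulmxA.
by rewrite mulmxDl -scalemxAl -!mulmxA scaleNr addrC.
Qed.

Lemma congr1_block (W : 'M[R]_n) : W^T *m schur *m W = 1%:M ->
  exists V : 'M_(1 + n), V^T *m block_mx a%:M b c D *m V = 1%:M.
Proof.
have [_ _ bT _] := symM.
move=> hW; pose s := (Num.sqrt a)^-1.
have ss : s * (s * a) = 1.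
  by rewrite mulrA -expr2 exprVn sqr_sqrtr ?ltW ?posdef_block_ul_gt0 // mulVf.
exists (block_mx s%:M (- a^-1 *: (b *m W)) 0 W).
rewrite tr_block_mx !mulmx_block tr_scalar_mx trmx0 !linearZ /= trmx_mul bT.
rewrite !mul0mx !mulmx0 !addr0 !mul_scalar_mx !mul_mx_scalar.
have -> : a *: (- a^-1 *: (W^T *m c)) + W^T *m c = 0.
  by rewrite scalerA (mulrN a) mulfV // scaleN1r addNr.
rewrite mul0mx !scaler0 !add0r.
rewrite scalar_mx_block; congr block_mx.
- by rewrite -[_%:M]scalemx1 !scalerA ss scale1r.
- rewrite -!scalemxAl mul_scalar_mx !scalerA -scalerDl.
  by rewrite mulrAC mulNr mulVf // mulN1r addNr scale0r.
- rewrite -hW /schur mulmxBr mulmxBl mulmxDl -scalemxAl -!scalemxAr -!scalemxAl.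
  by rewrite !mulmxA scaleNr addrC.
Qed.

End SchurComplement.

Lemma posdef_congr1 (R : rcfType) n (E : 'M[R]_n) :
  posdef E -> exists W : 'M_n, W^T *m E *m W = 1%:M.
Proof.
elim: n E => [|n IHn] E; first by exists 0; rewrite [LHS]flatmx0 [RHS]flatmx0.
have -> : E = block_mx (ulsubmx (E : 'M_(1 + n)) 0 0)%:M
    (ursubmx (E : 'M_(1 + n))) (dlsubmx (E : 'M_(1 + n))) (drsubmx (E : 'M_(1 + n))).
  by rewrite -mx11_scalar submxK.
move=> posE; have [W hW] := IHn _ (posdef_schur posE).
exact: congr1_block hW.
Qed.

Lemma mxtrace_mul_conj (R : comNzRingType) n (G W M : 'M[R]_n) :
  \tr (G *m (W *m M *m W^T) *m (G *m (W *m M *m W^T))) =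
  \tr (W^T *m G *m W *m M *m (W^T *m G *m W *m M)).
Proof. by rewrite !mulmxA mxtrace_mulC !mulmxA. Qed.

Section Congruence.

Variables (R : rcfType) (n : nat) (E W : 'M[R]_n).
Hypothesis hW : W^T *m E *m W = 1%:M.

Lemma invmx_congr1 : invmx E = W *m W^T.
Proof.
have EWW : E *m (W *m W^T) = 1%:M by rewrite mulmxA; apply: mulmx1C; rewrite mulmxA.
have [uE _] := mulmx1_unit EWW.
by rewrite -[RHS]mul1mx -(mulVmx uE) -mulmxA EWW mulmx1.
Qed.

Lemma mxtrace_invmx_mul (Y : 'M[R]_n) : \tr (invmx E *m Y) = \tr (W^T *m Y *m W).
Proof. by rewrite invmx_congr1 -[RHS]mxtrace_mulC mulmxA. Qed.

Lemma normE_congr1 (Y : 'M[R]_n) : symmetric_mx Y -> normE E Y = frob (W^T *m Y *m W).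
Proof.
move=> symY; rewrite /normE /frob frob2E !trmx_mul trmxK symY invmx_congr1.
by rewrite -!mulmxA mxtrace_mulC !mulmxA.
Qed.

End Congruence.

Lemma ge0_of_approx (R : realFieldType) (x : R) :
  (forall e, 0 < e -> exists2 y, 0 <= y & `|y - x| <= e) -> 0 <= x.
Proof.
move=> near_x; apply/ler_addgt0Pr => e e_gt0; have [y y_ge0] := near_x e e_gt0.
by rewrite ler_norml => /andP[_ ?]; lra.
Qed.

Section NormE.

Variables (R : rcfType) (n : nat) (E : 'M[R]_n).
Hypothesis posE : posdef E.

Lemma normEN (Y : 'M[R]_n) : normE E (- Y) = normE E Y.
Proof. by rewrite /normE mulmxN mulNmx mulmxN opprK. Qed.

Lemma normED_le (Y Z : 'M[R]_n) : symmetric_mx Y -> symmetric_mx Z ->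
  normE E (Y + Z) <= normE E Y + normE E Z.
Proof.
move=> symY symZ; have [W hW] := posdef_congr1 posE.
have symYZ : symmetric_mx (Y + Z) by rewrite /symmetric_mx linearD /= symY symZ.
by rewrite !(normE_congr1 hW) // mulmxDr mulmxDl frobD_le.
Qed.

Lemma normr_mxtrace_invmx_le (Y : 'M[R]_n) : symmetric_mx Y ->
  `|\tr (invmx E *m Y)| <= Num.sqrt n%:R * normE E Y.
Proof.
move=> symY; have [W hW] := posdef_congr1 posE.
by rewrite (mxtrace_invmx_mul hW) (normE_congr1 hW) // normr_mxtrace_le.
Qed.

Lemma normE_dist_le (X Y : 'M[R]_n) : symmetric_mx X -> symmetric_mx Y ->
  `|normE E Y - normE E X| <= normE E (Y - X).
Proof.
move=> symX symY.
have symYX : symmetric_mx (Y - X) by rewrite /symmetric_mx linearB /= symX symY.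
have symNYX : symmetric_mx (- (Y - X)) by rewrite /symmetric_mx linearN /= symYX.
rewrite ler_distl; apply/andP; split.
- rewrite lerBlDr -(normEN (Y - X)).
  by rewrite -{1}(addrNK Y X) -opprB addrC normED_le.
- by rewrite -{1}(subrK X Y) addrC normED_le.
Qed.

Variable alpha : R.
Hypothesis alpha_gt0 : 0 < alpha.

Lemma K_E_gap_lipschitz (X Y : 'M[R]_n) : symmetric_mx X -> symmetric_mx Y ->
  `|(\tr (invmx E *m Y) - alpha * normE E Y) - (\tr (invmx E *m X) - alpha * normE E X)|
  <= (Num.sqrt n%:R + alpha) * normE E (Y - X).
Proof.
move=> symX symY.
have symYX : symmetric_mx (Y - X) by rewrite /symmetric_mx linearB /= symX symY.
have -> : forall a b c d : R, (a - alpha * b) - (c - alpha * d) = (a - c) - alpha * (b - d).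
  by move=> a b c d; ring.
rewrite -raddfB /= -mulmxBr mulrDl.
apply: le_trans (ler_normB _ _) _; apply: lerD; first exact: normr_mxtrace_invmx_le.
by rewrite normrM gtr0_norm // ler_wpM2l ?(ltW alpha_gt0) ?normE_dist_le.
Qed.

Lemma K_E_boundary_trace (X : 'M[R]_n) :
  sym_boundary E (K_E E alpha) X -> \tr (invmx E *m X) = alpha * normE E X.
Proof.
move=> [symX [inK outK]].
have L_gt0 : 0 < Num.sqrt n%:R + alpha by rewrite ltr_wpDl ?sqrtr_ge0.
pose gap Y := \tr (invmx E *m Y) - alpha * normE E Y.
have near_gap e : 0 < e -> forall Y, symmetric_mx Y ->
    normE E (Y - X) < e / (Num.sqrt n%:R + alpha) -> `|gap Y - gap X| <= e.
  move=> e_gt0 Y symY; rewrite ltr_pdivlMr // => d_lt.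
  by apply: le_trans (K_E_gap_lipschitz symX symY) _; rewrite mulrC ltW.
suff : gap X == 0 by rewrite subr_eq0 => /eqP.
rewrite eq_le; apply/andP; split.
- rewrite -oppr_ge0; apply: ge0_of_approx => e e_gt0.
  have [Y [symY dY notKY]] := outK _ (divr_gt0 e_gt0 L_gt0).
  exists (- gap Y); last by rewrite -opprD normrN near_gap.
  by rewrite oppr_ge0 subr_le0 ltW // ltNge; apply/negP => ?; apply: notKY.
- apply: ge0_of_approx => e e_gt0.
  have [Y [symY dY [_ KY]]] := inK _ (divr_gt0 e_gt0 L_gt0).
  by exists (gap Y); [rewrite subr_ge0 | exact: near_gap].
Qed.

End NormE.

Lemma normalized_q_lt (R : rcfType) n (A : 'M[R]_n) (alpha t b : R) :
  A^T = A -> 0 < alpha -> alpha < 1 -> \tr A = alpha * frob A ->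
  0 < t -> t * frob A <= alpha -> b * frob A = alpha ->
  (n%:R - alpha ^+ 2)^-2 *
    \tr ((1%:M + t *: A) *m (1%:M - b *: A) *m ((1%:M + t *: A) *m (1%:M - b *: A)))
  < (n%:R - alpha ^+ 2)^-1 *
    (1 - 2 * t * ((1 - alpha) / (n%:R - alpha ^+ 2)) * frob A * (alpha - t * frob A)).
Proof.
move=> symA alpha_gt0 alpha_lt1 trA t_gt0 tnu bnu.
have nu_gt0 : 0 < frob A.
  rewrite lt_neqAle frob_ge0 andbT; apply: contraTneq alpha_gt0 => nu0.
  by rewrite -bnu -nu0 mulr0 ltxx.
have n_ge1 : 1 <= n%:R :> R.
  have : alpha * frob A <= Num.sqrt n%:R * frob A.
    by rewrite -trA (le_trans (ler_norm _)) ?normr_mxtrace_le.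
  rewrite ler_pM2r // => /(lt_le_trans alpha_gt0).
  by rewrite sqrtr_gt0 ltr0n ler1n.
have trAA : \tr (A *m A) = frob A ^+ 2.
  by rewrite -[X in _ *m X]symA -frob2E sqr_frob.
rewrite mxtrace_expand_sqr trA trAA.
exact: trace_expansion_lt (mxtrace_cube_le symA) (mxtrace_pow4_le symA).
Qed.

Lemma mxtrace_sqr_congr1 (R : rcfType) n (E W X : 'M[R]_n) (t b : R) :
  W^T *m E *m W = 1%:M ->
  let A := W^T *m X *m W in
  let G := E + t *: X in
  let M := invmx E - b *: (invmx E *m X *m invmx E) in
  \tr (G *m M *m (G *m M)) =
  \tr ((1%:M + t *: A) *m (1%:M - b *: A) *m ((1%:M + t *: A) *m (1%:M - b *: A))).
Proof.
move=> hW A G M.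
have -> : M = W *m (1%:M - b *: A) *m W^T.
  rewrite /M (invmx_congr1 hW) mulmxBr mulmxBl mulmx1 -scalemxAr -scalemxAl.
  by rewrite /A !mulmxA.
have -> : 1%:M + t *: A = W^T *m G *m W.
  by rewrite mulmxDr mulmxDl hW -scalemxAr -scalemxAl.
exact: mxtrace_mul_conj.
Qed.

Unset Implicit Arguments.

Theorem proposition4p6 (R : rcfType) (n : nat) (E X : 'M[R]_n) (alpha t : R) :
  posdef E -> 0 < alpha -> alpha < 1 -> X != 0 ->
  sym_boundary E (K_E E alpha) X ->
  let S := (n%:R - alpha ^+ 2)^-1 *:
             (invmx E - (alpha ^+ 2 / \tr (invmx E *m X)) *:
                        (invmx E *m X *m invmx E)) in
  let q := fun s : R => \tr (((E + s *: X) *m S) *m ((E + s *: X) *m S)) in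
  0 < t -> t <= alpha / normE E X ->
  q t < (n%:R - alpha ^+ 2)^-1 *
        (1 - 2 * t * ((1 - alpha) / (n%:R - alpha ^+ 2)) * normE E X
               * (alpha - t * normE E X)).
Proof.
move=> posE alpha_gt0 alpha_lt1 _ bdX S q t_gt0 t_le.
have [W hW] := posdef_congr1 posE.
have symX : symmetric_mx X := bdX.1.
have trX := K_E_boundary_trace posE alpha_gt0 bdX.
pose A := W^T *m X *m W.
have symA : A^T = A by rewrite /A !trmx_mul trmxK symX mulmxA.
have nuE : normE E X = frob A := normE_congr1 hW symX.
have nu_gt0 : 0 < frob A.
  rewrite lt_neqAle frob_ge0 andbT; apply: contraTneq t_le => nu0.
  by rewrite nuE -nu0 invr0 mulr0 -ltNge.
rewrite /q /S -!scalemxAr -!scalemxAl scalerA mxtraceZ -expr2 exprVn.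
rewrite (mxtrace_sqr_congr1 X t _ hW) nuE; apply: normalized_q_lt => //.
- by rewrite -(mxtrace_invmx_mul hW) trX nuE.
- by rewrite -ler_pdivlMr // -nuE.
- by rewrite -/A trX nuE; field; rewrite ?mulf_neq0 ?gt_eqF.
Qed.
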